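(* Per-strategy scaling of payoffs does not in general map coarse correlated equilibria to reciprocally scaled coarse correlated equilibria. Precisely: there exist a finite two-player normal-form game $(G_1,G_2)$ with strategy sets $\mathcal{A}_1,\mathcal{A}_2$, positive functions $s_1:\mathcal{A}_1\to\mathbb{R}_{>0}$, $s_2:\mathcal{A}_2\to\mathbb{R}_{>0}$, and a coarse correlated equilibrium $\sigma$ of $(G_1,G_2)$ such that, with $\hat G_1(a_1,a_2)=s_2(a_2)G_1(a_1,a_2)$, $\hat G_2(a_1,a_2)=s_1(a_1)G_2(a_1,a_2)$ and $\hat\sigma(a_1,a_2)=\frac{\sigma(a_1,a_2)}{Z\,s_1(a_1)s_2(a_2)}$ where $Z=\sum_{a}\frac{\sigma(a)}{s_1(a_1)s_2(a_2)}$, the distribution $\hat\sigma$ is not a coarse correlated equilibrium of $(\hat G_1,\hat G_2)$.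
   Context: A joint distribution $\sigma$ on $\mathcal{A}_1\times\mathcal{A}_2$ is a coarse correlated equilibrium (CCE) of $(G_1,G_2)$ if for each player $p\in\{1,2\}$ and each $a'_p\in\mathcal{A}_p$: $\sum_{a}\sigma(a)\big(G_p(a'_p,a_{-p})-G_p(a)\big)\le 0$, where $a_{-p}$ is the other player's strategy. *)

From mathcomp Require Import all_boot all_order all_algebra.
From mathcomp Require Import reals.
Set Implicit Arguments. Unset Strict Implicit. Unset Printing Implicit Defensive.
Import Order.TTheory GRing.Theory Num.Theory.
Local Open Scope ring_scope.

Definition is_distr (R : realType) (T : finType) (sigma : T -> R) : Prop :=
  (forall t, 0 <= sigma t) /\ \sum_(t : T) sigma t = 1.

Definition is_CCE (R : realType) (A1 A2 : finType)
  (G1 G2 : A1 -> A2 -> R) (sigma : A1 * A2 -> R) : Prop :=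
  is_distr sigma /\
  (forall a1' : A1,
      \sum_(a : A1 * A2) sigma a * (G1 a1' a.2 - G1 a.1 a.2) <= 0) /\
  (forall a2' : A2,
      \sum_(a : A1 * A2) sigma a * (G2 a.1 a2' - G2 a.1 a.2) <= 0).

From mathcomp Require Import all_boot all_order all_algebra.
From mathcomp Require Import reals.
From mathcomp Require Import ring lra.
Import Order.TTheory GRing.Theory Num.Theory.
Local Open Scope ring_scope.

(* The reweighting preserves correlated equilibria: the constraint for a
   recommended action a2 is merely multiplied by 1 / (Z s2(a2)).  Coarse
   constraints, however, pool all recommendations, so we start from a CCE
   that is not a CE.  Player 1 tosses a fair coin; player 2, paid 1 for
   guessing it, always guesses [false] (right half of the time, like any
   fixed guess) but attaches to the guess a payoff-irrelevant label equal
   to the negated coin.  Giving the label [true] scale 2 halves the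
   reweighted mass of the coin [false], so the coin is [true] with
   probability 2/3 and guessing [true] pays. *)

Lemma sumr_pair_support {V : nmodType} {T : finType} (u v : T) (F : T -> V) :
  u != v -> (forall t, t != u -> t != v -> F t = 0) ->
  \sum_t F t = F u + F v.
Proof.
move=> neq_uv F0; rewrite (bigD1 u) //= (bigD1 v) 1?eq_sym //= big1 ?addr0 //.
by move=> t /andP[tu tv]; apply: F0.
Qed.

Section GuessingGame.
Variable R : realType.

Definition guess (a1 : bool) (a2 : bool * bool) : R := (a1 == a2.1)%:R.

Definition label_scale (a2 : bool * bool) : R := if a2.2 then 2 else 1.

Definition bluff (a : bool * (bool * bool)) : R :=
  if a.2 == (false, ~~ a.1) then 2^-1 else 0.

Lemma sum_bluffM (F : bool * (bool * bool) -> R) :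
  \sum_a bluff a * F a = (F (true, (false, false)) + F (false, (false, true))) / 2.
Proof.
rewrite (sumr_pair_support (true, (false, false)) (false, (false, true))) //.
  by rewrite /bluff /=; lra.
by move=> [[] [[] []]] //= _ _; rewrite /bluff /= mul0r.
Qed.

Lemma bluff_distr : is_distr bluff.
Proof.
split; first by move=> [[] [[] []]]; rewrite /bluff /=; lra.
under eq_bigr do rewrite -[bluff _]mulr1.
by rewrite sum_bluffM; lra.
Qed.

Lemma bluff_CCE (G1 : bool -> bool * bool -> R) :
  (forall a1 a1' a2, G1 a1' a2 = G1 a1 a2) -> is_CCE G1 guess bluff.
Proof.
move=> G1_indifferent; split; first exact: bluff_distr.
split=> [a1' | [x y]].
  by rewrite big1 // => a _; rewrite (G1_indifferent a.1) subrr mulr0.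
by rewrite sum_bluffM /guess /=; case: x => /=; lra.
Qed.

Lemma bluff_normalizer : \sum_a bluff a / label_scale a.2 = 3/4.
Proof. by rewrite sum_bluffM /label_scale /=; lra. Qed.

Lemma reweighted_bluff_guess_true_gain :
  \sum_a bluff a / (3/4 * label_scale a.2) *
    (guess a.1 (true, true) - guess a.1 a.2) = 1/3.
Proof.
under eq_bigr do rewrite -mulrA.
by rewrite sum_bluffM /label_scale /guess /=; field.
Qed.

End GuessingGame.

Theorem mainTheorem2 (R : realType) :
  exists (A1 A2 : finType) (G1 G2 : A1 -> A2 -> R)
         (s1 : A1 -> R) (s2 : A2 -> R) (sigma : A1 * A2 -> R),
    (forall a1, 0 < s1 a1) /\ (forall a2, 0 < s2 a2) /\
    is_CCE G1 G2 sigma /\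
    let Z := \sum_(a : A1 * A2) sigma a / (s1 a.1 * s2 a.2) in
    ~ is_CCE (fun a1 a2 => s2 a2 * G1 a1 a2) (fun a1 a2 => s1 a1 * G2 a1 a2)
             (fun a => sigma a / (Z * s1 a.1 * s2 a.2)).
Proof.
exists bool, (bool * bool)%type, (fun _ _ => 0), (@guess R),
  (fun _ => 1), (@label_scale R), (@bluff R).
split; first by move=> _; exact: ltr01.
split; first by move=> [? []]; rewrite /label_scale /=; lra.
split; first by apply: bluff_CCE.
move=> Z [_ [_ /(_ (true, true))]].
have -> : Z = 3/4.
  by rewrite /Z -(bluff_normalizer R); apply: eq_bigr => a _; rewrite mul1r.
apply/negP; rewrite -ltNge.
under eq_bigr do rewrite !mul1r mulr1.
by rewrite reweighted_bluff_guess_true_gain; lra.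
Qed.
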